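(* Let $G$ be a topological group and let $\mathcal{K}$ be a collection of $G$-spaces that is closed under taking projective limits. Then every $\mathcal{K}$-universal $G$-space $M$ is coalescent: every epimorphism $\varphi: M \to M$ is injective, hence an isomorphism.
   Context: A $G$-space is a nonempty compact Hausdorff space $X$ together with a jointly continuous action $G \times X \to X$ of the (Hausdorff) topological group $G$. An epimorphism of $G$-spaces is a surjective continuous $G$-equivariant map; $Y$ is a factor of $X$ if there is an epimorphism $X \to Y$. An isomorphism is a bijective epimorphism (equivalently a $G$-equivariant homeomorphism). Given a collection $\mathcal{K}$ of $G$-spaces, a $G$-space $M$ is $\mathcal{K}$-universal if $M \in \mathcal{K}$ and every $N \in \mathcal{K}$ is a factor of $M$. $\mathcal{K}$ is closed under taking projective limits means: whenever $\alpha$ is an ordinal, $(X_\gamma)_{\gamma<\alpha}$ are $G$-spaces in $\mathcal{K}$ and $\phi_{\delta,\gamma}: X_\gamma \to X_\delta$ ($\delta \le \gamma < \alpha$) are epimorphisms with $\phi_{\gamma,\gamma}=\mathrm{id}$ and $\phi_{\delta,\epsilon} = \phi_{\delta,\gamma}\circ\phi_{\gamma,\epsilon}$ for $\delta\le\gamma\le\epsilon$, the projective (inverse) limit $\{(x_\gamma)_{\gamma<\alpha} \in \prod_{\gamma<\alpha} X_\gamma : \phi_{\delta,\gamma}(x_\gamma)=x_\delta \text{ for all } \delta\le\gamma\}$, with the product topology and diagonal $G$-action, belongs to $\mathcal{K}$. A $G$-space $M$ is coalescent if every epimorphism $M \to M$ is an isomorphism. *)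

From Stdlib Require Import List.
Import ListNotations.
Set Implicit Arguments.

Definition is_topology {X : Type} (op : (X -> Prop) -> Prop) : Prop :=
  op (fun _ => True) /\
  (forall U V, op U -> op V -> op (fun x => U x /\ V x)) /\
  (forall F : (X -> Prop) -> Prop,
      (forall U, F U -> op U) -> op (fun x => exists U, F U /\ U x)).

Definition continuous {X Y : Type} (opX : (X -> Prop) -> Prop)
  (opY : (Y -> Prop) -> Prop) (f : X -> Y) : Prop :=
  forall V, opY V -> opX (fun x => V (f x)).

Definition prod_open {X Y : Type} (opX : (X -> Prop) -> Prop)
  (opY : (Y -> Prop) -> Prop) (W : X * Y -> Prop) : Prop :=
  forall p, W p -> exists A B, opX A /\ opY B /\ A (fst p) /\ B (snd p) /\
    forall q, A (fst q) -> B (snd q) -> W q.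

Definition hausdorff {X : Type} (op : (X -> Prop) -> Prop) : Prop :=
  forall x y : X, x <> y ->
    exists U V, op U /\ op V /\ U x /\ V y /\ forall z, ~ (U z /\ V z).

Definition compact {X : Type} (op : (X -> Prop) -> Prop) : Prop :=
  forall F : (X -> Prop) -> Prop,
    (forall U, F U -> op U) -> (forall x, exists U, F U /\ U x) ->
    exists l : list (X -> Prop),
      (forall U, In U l -> F U) /\ forall x, exists U, In U l /\ U x.

Record TopGroup := mkTopGroup {
  tg_carrier :> Type;
  tg_mul : tg_carrier -> tg_carrier -> tg_carrier;
  tg_inv : tg_carrier -> tg_carrier;
  tg_one : tg_carrier;
  tg_open : (tg_carrier -> Prop) -> Prop;
  tg_assoc : forall a b c, tg_mul a (tg_mul b c) = tg_mul (tg_mul a b) c;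
  tg_one_l : forall a, tg_mul tg_one a = a;
  tg_one_r : forall a, tg_mul a tg_one = a;
  tg_inv_l : forall a, tg_mul (tg_inv a) a = tg_one;
  tg_inv_r : forall a, tg_mul a (tg_inv a) = tg_one;
  tg_top : is_topology tg_open;
  tg_hausdorff : hausdorff tg_open;
  tg_mul_cont : continuous (prod_open tg_open tg_open)
                  tg_open (fun p => tg_mul (fst p) (snd p));
  tg_inv_cont : continuous tg_open tg_open tg_inv }.

Section GSpaces.
Variable G : TopGroup.

Definition is_gspace {X : Type} (op : (X -> Prop) -> Prop) (act : G -> X -> X) : Prop :=
  is_topology op /\ inhabited X /\ compact op /\ hausdorff op /\
  continuous (prod_open (tg_open G) op) op (fun p => act (fst p) (snd p)) /\
  (forall x, act (tg_one G) x = x) /\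
  (forall g h x, act g (act h x) = act (tg_mul G g h) x).

Record GSpace := mkGSpace {
  gs_carrier :> Type;
  gs_open : (gs_carrier -> Prop) -> Prop;
  gs_act : G -> gs_carrier -> gs_carrier;
  gs_ax : is_gspace gs_open gs_act }.

Definition equivariant (X Y : GSpace) (f : X -> Y) : Prop :=
  forall g x, f (gs_act X g x) = gs_act Y g (f x).

Definition epimorphism (X Y : GSpace) (f : X -> Y) : Prop :=
  (forall y, exists x, f x = y) /\ continuous (gs_open X) (gs_open Y) f /\
  equivariant X Y f.

Definition isomorphism (X Y : GSpace) (f : X -> Y) : Prop :=
  epimorphism X Y f /\ (forall x x', f x = f x' -> x = x').

Definition factor_of (Y X : GSpace) : Prop := exists f : X -> Y, epimorphism X Y f.

Definition universal (K : GSpace -> Prop) (M : GSpace) : Prop :=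
  K M /\ forall N, K N -> factor_of N M.

Definition coalescent (M : GSpace) : Prop :=
  forall f : M -> M, epimorphism M M f -> isomorphism M M f.

(** An ordinal alpha is represented by the index set {gamma < alpha}, i.e. a
    type with a strict well-order (well-founded, transitive, trichotomous).
    The bonding maps are given for all pairs, but only those with
    delta <= gamma are constrained or used. *)

Record InvSys := mkInvSys {
  sys_idx : Type;
  sys_lt : sys_idx -> sys_idx -> Prop;
  sys_lt_wf : well_founded sys_lt;
  sys_lt_trans : forall a b c, sys_lt a b -> sys_lt b c -> sys_lt a c;
  sys_lt_total : forall a b, sys_lt a b \/ a = b \/ sys_lt b a;
  sys_sp : sys_idx -> GSpace;
  sys_map : forall d g : sys_idx, sys_sp g -> sys_sp d;
  sys_map_epi : forall d g, (sys_lt d g \/ d = g) ->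
      epimorphism (sys_sp g) (sys_sp d) (sys_map d g);
  sys_map_id : forall g x, sys_map g g x = x;
  sys_map_comp : forall d g e, (sys_lt d g \/ d = g) -> (sys_lt g e \/ g = e) ->
      forall x, sys_map d e x = sys_map d g (sys_map g e x) }.

Definition lim_carrier (S : InvSys) : Type :=
  { x : forall i, sys_sp S i |
    forall d g, (sys_lt S d g \/ d = g) -> sys_map S d g (x g) = x d }.

(* subspace topology of the product topology *)
Definition lim_open (S : InvSys) (U : lim_carrier S -> Prop) : Prop :=
  forall x, U x ->
    exists (l : list (sys_idx S)) (V : forall i, sys_sp S i -> Prop),
      (forall i, In i l -> gs_open (sys_sp S i) (V i)) /\
      (forall i, In i l -> V i (proj1_sig x i)) /\
      (forall y : lim_carrier S, (forall i, In i l -> V i (proj1_sig y i)) -> U y).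

Lemma lim_act_compat (S : InvSys) (g : G) (x : lim_carrier S) :
  forall d e, (sys_lt S d e \/ d = e) ->
    sys_map S d e (gs_act _ g (proj1_sig x e)) = gs_act _ g (proj1_sig x d).
Proof.
  intros d e H. destruct (@sys_map_epi S d e H) as [_ [_ Heq]].
  rewrite Heq, (proj2_sig x _ _ H). reflexivity.
Qed.

Definition lim_act (S : InvSys) (g : G) (x : lim_carrier S) : lim_carrier S :=
  exist _ (fun i => gs_act _ g (proj1_sig x i)) (@lim_act_compat S g x).

(* K is closed under projective limits: whenever all X_gamma are in K, the
   projective limit (which is always a G-space; the proof H is irrelevant)
   belongs to K. *)
Definition closed_under_proj_limits (K : GSpace -> Prop) : Prop :=
  forall S : InvSys, (forall i, K (sys_sp S i)) ->
    forall H : is_gspace (@lim_open S) (@lim_act S),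
      K (@mkGSpace (lim_carrier S) (@lim_open S) (@lim_act S) H).

End GSpaces.

(* Suppose an epimorphism [phi : M -> M] identifies two points [x1 <> x2].  By transfinite
   recursion over ordinals too large to inject into [M * M], build an inverse system of copies
   of [M]: the limit of the levels below [γ] lies in [K], so universality maps [M] onto it, and
   the bonding maps out of level [γ] are this map after [phi], followed by the projections.
   All bonding maps then identify [x1] and [x2].  Mapping [M] onto the limit of the whole
   system and lifting the threads through [x1] and [x2] at level [γ] gives a pair of points
   of [M] whose images first differ at level [γ]; so [γ] determines the pair, which is
   impossible by cardinality. *)

From Stdlib Require Import List Wellfounded Classical ClassicalEpsilon
  FunctionalExtensionality PropExtensionality ProofIrrelevance.
Import ListNotations.
Set Implicit Arguments.

Section Ordinals.
Variable X : Type.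

Inductive wtree : Type := wzero : wtree | wsup : (X -> wtree) -> wtree.

Fixpoint wle (s t : wtree) : Prop :=
  match s with
  | wzero => True
  | wsup f => forall a, match t with
                        | wzero => False
                        | wsup g => exists b, wle (f a) (g b)
                        end
  end.

Definition wlt (s t : wtree) : Prop :=
  match t with wzero => False | wsup g => exists b, wle s (g b) end.

Lemma wle_wsup f t : wle (wsup f) t <-> forall a, wlt (f a) t.
Proof. destruct t; simpl; tauto. Qed.

Lemma wle_refl s : wle s s.
Proof. induction s as [|f IH]; simpl; auto. intro a. exists a. apply IH. Qed.

Lemma wle_trans r s t : wle r s -> wle s t -> wle r t.
Proof.
  revert s t. induction r as [|f IH]; intros s t Hrs Hst; simpl; auto.
  intro a. destruct s as [|g]; [destruct (Hrs a)|].
  destruct (Hrs a) as [b Hb]. destruct t as [|h]; [destruct (Hst b)|].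
  destruct (Hst b) as [c Hc]. exists c. eauto.
Qed.

Lemma wlt_wle_trans r s t : wlt r s -> wle s t -> wlt r t.
Proof.
  intros Hrs Hst. destruct s as [|g]; [destruct Hrs|]. destruct Hrs as [b Hb].
  destruct t as [|h]; [destruct (Hst b)|].
  destruct (Hst b) as [c Hc]. exists c. eapply wle_trans; eauto.
Qed.

Lemma wle_wlt_trans r s t : wle r s -> wlt s t -> wlt r t.
Proof.
  intros Hrs Hst. destruct t as [|h]; [destruct Hst|].
  destruct Hst as [c Hc]. exists c. eapply wle_trans; eauto.
Qed.

Lemma wlt_wsup g b : wlt (g b) (wsup g).
Proof. exists b. apply wle_refl. Qed.

Lemma wltW s t : wlt s t -> wle s t.
Proof.
  revert t. induction s as [|f IH]; intros t Hst; simpl; auto.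
  intro a. destruct t as [|g]; [destruct Hst|]. destruct Hst as [b Hb].
  assert (Hfa : wlt (f a) (g b)) by (apply wle_wsup; exact Hb).
  exact (wle_wlt_trans _ _ _ (IH a _ Hfa) (wlt_wsup g b)).
Qed.

Lemma wlt_trans r s t : wlt r s -> wlt s t -> wlt r t.
Proof. intros Hrs Hst. exact (wle_wlt_trans _ _ _ (wltW _ _ Hrs) Hst). Qed.

Lemma wlt_wf : well_founded wlt.
Proof.
  enough (Hle : forall t s, wle s t -> Acc wlt s) by (intro s; exact (Hle s s (wle_refl s))).
  induction t as [|g IH]; intros s Hs; constructor; intros r Hr;
    pose proof (wlt_wle_trans _ _ _ Hr Hs) as Hrt; [destruct Hrt|].
  destruct Hrt as [b Hb]. eauto.
Qed.

Lemma wlt_irrefl s : ~ wlt s s.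
Proof. induction (wlt_wf s) as [s _ IH]. intro H. exact (IH s H H). Qed.

Lemma wtree_total s t : (wle s t \/ wlt t s) /\ (wle t s \/ wlt s t).
Proof.
  revert t. induction s as [|f IH]; intro t.
  - split; [left; exact I|]. destruct t as [|g]; [left; exact I|].
    destruct (classic (forall a, wlt (g a) wzero)) as [H|H].
    + left. apply wle_wsup. exact H.
    + right. apply not_all_ex_not in H. destruct H as [a _]. exists a. exact I.
  - assert (Hf : forall t, wle (wsup f) t \/ wlt t (wsup f)).
    { intro t0. destruct (classic (forall a, wlt (f a) t0)) as [H|H].
      - left. apply wle_wsup. exact H.
      - right. apply not_all_ex_not in H. destruct H as [a Ha].
        destruct (proj2 (IH a t0)) as [H1|H1]; [exists a; exact H1|contradiction]. }
    split; [apply Hf|]. destruct t as [|g]; [left; exact I|].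
    destruct (classic (forall b, wlt (g b) (wsup f))) as [H|H].
    + left. apply wle_wsup. exact H.
    + right. apply not_all_ex_not in H. destruct H as [b Hb].
      destruct (Hf (g b)) as [H1|H1]; [exists b; exact H1|contradiction].
Qed.

Definition weq s t := wle s t /\ wle t s.

(* A canonical representative of each [weq]-class, so that [ord] below is trichotomous. *)
Definition wrep (s : wtree) : wtree := epsilon (inhabits s) (weq s).

Lemma weq_wrep s : weq s (wrep s).
Proof. unfold wrep. apply epsilon_spec. exists s. split; apply wle_refl. Qed.

Lemma wrep_eq s t : weq s t -> wrep s = wrep t.
Proof.
  intros [Hst Hts]. unfold wrep.
  replace (weq t) with (weq s); [f_equal; apply proof_irrelevance|].
  apply functional_extensionality; intro u. apply propositional_extensionality.
  split; intros [H1 H2]; split; eauto using wle_trans.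
Qed.

Definition ord := { s : wtree | wrep s = s }.

Definition ord_lt (i j : ord) : Prop := wlt (proj1_sig i) (proj1_sig j).

Definition ord_of (s : wtree) : ord.
Proof.
  exists (wrep s). apply wrep_eq. destruct (weq_wrep s). split; assumption.
Defined.

Lemma ord_lt_wf : well_founded ord_lt.
Proof. exact (wf_inverse_image _ _ wlt _ wlt_wf). Qed.

Lemma ord_lt_trans i j k : ord_lt i j -> ord_lt j k -> ord_lt i k.
Proof. apply wlt_trans. Qed.

Lemma ord_lt_irrefl i : ~ ord_lt i i.
Proof. apply wlt_irrefl. Qed.

Lemma ord_lt_total i j : ord_lt i j \/ i = j \/ ord_lt j i.
Proof.
  destruct i as [s Hs], j as [t Ht]. unfold ord_lt; simpl.
  destruct (wtree_total s t) as [[H1|H1] [H2|H2]]; auto.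
  right; left. assert (s = t) as <- by (rewrite <- Hs, <- Ht; apply wrep_eq; split; auto).
  f_equal. apply proof_irrelevance.
Qed.

(* Hartogs: the supremum of the ordinals hit by an injection [ord -> X] would lie
   strictly above all of them, itself included. *)
Lemma no_injection_ord (e : ord -> X) : (forall i j, e i = e j -> i = j) -> False.
Proof.
  intro He.
  set (h := fun x : X => match excluded_middle_informative (exists i, e i = x) with
              | left H => proj1_sig (proj1_sig (constructive_indefinite_description _ H))
              | right _ => wzero end).
  assert (Hbelow : forall i : ord, wlt (proj1_sig i) (wsup h)).
  { intro i. exists (e i). unfold h.
    destruct (excluded_middle_informative _) as [H|H]; [|exfalso; eauto].
    destruct (constructive_indefinite_description _ H) as [i' Hi']; simpl.
    rewrite (He _ _ Hi'). apply wle_refl. }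
  apply (wlt_irrefl (wrep (wsup h))).
  exact (wlt_wle_trans _ _ _ (Hbelow (ord_of (wsup h))) (proj1 (weq_wrep _))).
Qed.
End Ordinals.

(* Transfinite recursion for a relation: [Q e x z] says that [z] is an admissible value at
   [e] given the values [x] below [e]. *)
Lemma transfinite_choice {J : Type} (lt : J -> J -> Prop) (wf : well_founded lt)
  (lt_trans : forall a b c, lt a b -> lt b c -> lt a c)
  (A : J -> Type) (A_inh : forall j, inhabited (A j))
  (Q : forall e, (forall d, A d) -> A e -> Prop)
  (Q_local : forall e x x' z, (forall d, lt d e -> x d = x' d) -> Q e x z -> Q e x' z)
  (Q_step : forall e x, (forall d, lt d e -> Q d x (x d)) -> exists z, Q e x z) :
  exists x : forall e, A e, forall e, Q e x (x e).
Proof.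
  set (extend := fun e (rec : forall d, lt d e -> A d) (d : J) =>
     match excluded_middle_informative (lt d e) with
     | left p => rec d p
     | right _ => epsilon (A_inh d) (fun _ => True)
     end).
  set (body := fun e (rec : forall d, lt d e -> A d) =>
     epsilon (A_inh e) (Q e (extend e rec))).
  set (x := Fix wf A body).
  assert (x_eq : forall e, x e = body e (fun d _ => x d)).
  { intro e. apply (Fix_eq wf A body). intros e0 f g Hfg. unfold body.
    replace (extend e0 f) with (extend e0 g); [reflexivity|].
    apply functional_extensionality_dep; intro d. unfold extend.
    destruct (excluded_middle_informative _); auto. }
  exists x. intro e. induction (wf e) as [e _ IH].
  set (y := extend e (fun d _ => x d)).
  assert (y_below : forall d, lt d e -> y d = x d).
  { intros d Hd. unfold y, extend. destruct (excluded_middle_informative _); tauto. }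
  apply Q_local with y; [exact y_below|]. rewrite x_eq. apply epsilon_spec, Q_step.
  intros d Hd. rewrite y_below by exact Hd. apply Q_local with x; [|exact (IH d Hd)].
  intros d' Hd'. symmetry. apply y_below. eauto.
Qed.

Section OpenSets.
Variables (X : Type) (op : (X -> Prop) -> Prop).
Hypothesis op_top : is_topology op.

Lemma open_ext U V : op U -> (forall x, U x <-> V x) -> op V.
Proof.
  intros HU E. replace V with U; [exact HU|].
  apply functional_extensionality; intro x. apply propositional_extensionality, E.
Qed.

Lemma open_and U V : op U -> op V -> op (fun x => U x /\ V x).
Proof. apply op_top. Qed.

Lemma open_impl (P : Prop) U : (P -> op U) -> op (fun x => P -> U x).
Proof.
  intro HU. destruct (classic P) as [p|np].
  - apply open_ext with U; [exact (HU p)|tauto].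
  - apply open_ext with (fun _ => True); [apply op_top|tauto].
Qed.

Lemma open_forall_in {A : Type} (l : list A) (U : A -> X -> Prop) :
  (forall a, In a l -> op (U a)) -> op (fun x => forall a, In a l -> U a x).
Proof.
  induction l as [|a l IH]; intro HU.
  - apply open_ext with (fun _ => True); [apply op_top|simpl; tauto].
  - apply open_ext with (fun x => U a x /\ forall b, In b l -> U b x).
    + apply open_and; [apply HU; left; reflexivity|apply IH; intros; apply HU; right; auto].
    + intro x; simpl; split; [intros [H1 H2] b [<-|Hb]; auto|auto].
Qed.
End OpenSets.

Section GSpaceFacts.
Variables (G : TopGroup) (X : GSpace G).

Lemma gs_topology : is_topology (gs_open X).
Proof. apply (gs_ax X). Qed.

Lemma gs_inhabited : inhabited X.
Proof. apply (gs_ax X). Qed.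

Lemma gs_compact : compact (gs_open X).
Proof. apply (gs_ax X). Qed.

Lemma gs_hausdorff : hausdorff (gs_open X).
Proof. apply (gs_ax X). Qed.

Lemma gs_act_continuous :
  continuous (prod_open (tg_open G) (gs_open X)) (gs_open X) (fun p => gs_act X (fst p) (snd p)).
Proof. apply (gs_ax X). Qed.

Lemma gs_act_one x : gs_act X (tg_one G) x = x.
Proof. apply (gs_ax X). Qed.

Lemma gs_act_mul g h x : gs_act X g (gs_act X h x) = gs_act X (tg_mul G g h) x.
Proof. apply (gs_ax X). Qed.
End GSpaceFacts.

Section Epimorphisms.
Variable G : TopGroup.

Lemma epimorphism_id (X : GSpace G) : epimorphism X X (fun x => x).
Proof. split; [eauto|split; [intros V HV; exact HV|intros g x; reflexivity]]. Qed.

Lemma epimorphism_comp (X Y Z : GSpace G) f h :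
  epimorphism X Y f -> epimorphism Y Z h -> epimorphism X Z (fun x => h (f x)).
Proof.
  intros [Sf [Cf Ef]] [Sh [Ch Eh]]. split; [|split].
  - intro z. destruct (Sh z) as [y <-]. destruct (Sf y) as [x <-]. eauto.
  - intros V HV. apply (Cf (fun y => V (h y))), Ch, HV.
  - intros g x. rewrite (Ef g x), (Eh g (f x)). reflexivity.
Qed.

Lemma epimorphism_ext (X Y : GSpace G) f f' :
  (forall x, f x = f' x) -> epimorphism X Y f -> epimorphism X Y f'.
Proof. intros E. replace f' with f; [auto|apply functional_extensionality, E]. Qed.
End Epimorphisms.

Section ProjectiveLimit.
Variables (G : TopGroup) (S : InvSys G).

Local Notation J := (sys_idx S).
Local Notation lt := (sys_lt S).
Local Notation X := (sys_sp S).
Local Notation L := (lim_carrier S).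
Local Notation pmap := (sys_map S).

Definition lim_proj (x : L) (i : J) : X i := proj1_sig x i.

Lemma lim_proj_map (x : L) d e : lt d e \/ d = e -> pmap d e (lim_proj x e) = lim_proj x d.
Proof. exact (proj2_sig x d e). Qed.

Lemma lim_ext (x y : L) : (forall i, lim_proj x i = lim_proj y i) -> x = y.
Proof.
  destruct x as [x Hx], y as [y Hy]. unfold lim_proj; simpl. intro E.
  assert (x = y) as <- by (apply functional_extensionality_dep, E).
  f_equal. apply proof_irrelevance.
Qed.

Lemma sys_map_continuous d e :
  lt d e \/ d = e -> continuous (gs_open (X e)) (gs_open (X d)) (pmap d e).
Proof. intro H. apply (sys_map_epi S H). Qed.

Lemma sys_list_max (l : list J) :
  l <> [] -> exists m, In m l /\ forall i, In i l -> lt i m \/ i = m.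
Proof.
  induction l as [|a l IH]; intro Hl; [congruence|].
  destruct l as [|b l].
  - exists a. split; [left; reflexivity|]. intros i [<-|[]]. auto.
  - destruct IH as [m [Hm Hmax]]; [congruence|].
    destruct (sys_lt_total S a m) as [Ham|[<-|Hma]].
    + exists m. split; [right; exact Hm|]. intros i [<-|Hi]; auto.
    + exists a. split; [left; reflexivity|]. intros i [<-|Hi]; auto.
    + exists a. split; [left; reflexivity|]. intros i [<-|Hi]; [auto|].
      destruct (Hmax i Hi) as [Him| ->]; [left; exact (sys_lt_trans S _ _ _ Him Hma)|auto].
Qed.

(* [V] as a constraint on coordinate [i] alone, the other coordinates being unconstrained. *)
Definition at_index (i : J) (V : X i -> Prop) (j : J) (z : X j) : Prop :=
  forall E : j = i, V (eq_rect j X z i E).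

Lemma at_index_self i V z : at_index i V i z <-> V z.
Proof.
  split; [intro H; exact (H eq_refl)|intros Vz E].
  rewrite (proof_irrelevance _ E eq_refl). exact Vz.
Qed.

Lemma at_index_open i V j : gs_open (X i) V -> gs_open (X j) (at_index i V j).
Proof.
  intro HV. destruct (classic (j = i)) as [<-|Hji].
  - apply (open_ext _ _ _ HV). intro z. symmetry. apply at_index_self.
  - apply (open_ext _ (fun _ => True)); [apply gs_topology|]. intro z. unfold at_index. tauto.
Qed.

Lemma lim_proj_continuous i : continuous (lim_open (S:=S)) (gs_open (X i)) (fun x => lim_proj x i).
Proof.
  intros V HV x Hx. exists [i], (at_index i V). split; [|split].
  - intros j _. apply at_index_open, HV.
  - intros j [<-|[]]. apply at_index_self, Hx.
  - intros y Hy. apply at_index_self, (Hy i (or_introl eq_refl)).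
Qed.

Lemma lim_topology : is_topology (lim_open (S:=S)).
Proof.
  split; [|split].
  - intros x _. exists [], (fun _ _ => True). simpl. tauto.
  - intros U V HU HV x [Ux Vx].
    destruct (HU x Ux) as [l1 [V1 [HV1 [V1x C1]]]].
    destruct (HV x Vx) as [l2 [V2 [HV2 [V2x C2]]]].
    exists (l1 ++ l2), (fun j z => (In j l1 -> V1 j z) /\ (In j l2 -> V2 j z)).
    split; [|split].
    + intros j _. apply open_and; [apply gs_topology|apply open_impl..];
        auto using gs_topology.
    + intros j _. auto.
    + intros y Hy. split; [apply C1|apply C2]; intros i Hi; apply (Hy i); auto using in_or_app.
  - intros F HF x [U [FU Ux]].
    destruct (HF U FU x Ux) as [l [V [HV [Vx C]]]].
    exists l, V. split; [|split]; auto. intros y Hy. exists U. auto.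
Qed.

Lemma lim_hausdorff : hausdorff (lim_open (S:=S)).
Proof.
  intros x y Hxy.
  assert (Hi : exists i, lim_proj x i <> lim_proj y i).
  { apply NNPP. intro H. apply Hxy, lim_ext. intro i. apply NNPP. eauto. }
  destruct Hi as [i Hi].
  destruct (gs_hausdorff (X i) Hi) as [U [V [HU [HV [Ux [Vy D]]]]]].
  exists (fun z => U (lim_proj z i)), (fun z => V (lim_proj z i)).
  repeat split; auto; apply lim_proj_continuous; assumption.
Qed.

Lemma lim_act_continuous_in (l : list J) (V : forall j, X j -> Prop) (h : G) (x : L) :
  (forall j, In j l -> gs_open (X j) (V j)) ->
  (forall j, In j l -> V j (gs_act _ h (lim_proj x j))) ->
  exists (A : G -> Prop) (B : forall j, X j -> Prop),
    tg_open G A /\ A h /\ (forall j, In j l -> gs_open (X j) (B j)) /\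
    (forall j, In j l -> B j (lim_proj x j)) /\
    forall h' (y : L), A h' -> (forall j, In j l -> B j (lim_proj y j)) ->
      forall j, In j l -> V j (gs_act _ h' (lim_proj y j)).
Proof.
  induction l as [|j l IH]; intros HV Vx.
  - exists (fun _ => True), (fun _ _ => True).
    repeat split; [apply tg_top|intros; contradiction..].
  - destruct IH as [A [B [HA [Ah [HB [Bx HAB]]]]]];
      [intros; first [apply HV|apply Vx]; right; auto..|].
    destruct (gs_act_continuous (X j) (V j) (HV j (or_introl eq_refl)) (h, lim_proj x j)
                (Vx j (or_introl eq_refl))) as [A1 [B1 [HA1 [HB1 [A1h [B1x H1]]]]]].
    exists (fun k => A k /\ A1 k), (fun k z => at_index j B1 k z /\ (In k l -> B k z)).
    split; [|split; [|split; [|split]]].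
    + apply open_and; auto using tg_top.
    + auto.
    + intros k _. apply open_and; [apply gs_topology|apply at_index_open, HB1|].
      apply open_impl; [apply gs_topology|apply HB].
    + intros k _. split; [intros <-; exact B1x|apply Bx].
    + intros h' y [Ah' A1h'] By k [<-|Hk].
      * apply (H1 (h', lim_proj y j)); [exact A1h'|apply at_index_self, (By j (or_introl eq_refl))].
      * apply HAB; auto. intros i Hi. apply (By i (or_intror Hi)). exact Hi.
Qed.

Lemma lim_act_continuous : continuous (prod_open (tg_open G) (lim_open (S:=S))) (lim_open (S:=S))
   (fun p => lim_act (fst p) (snd p)).
Proof.
  intros W HW [h x] Wp.
  destruct (HW _ Wp) as [l [V [HV [Vx C]]]].
  destruct (lim_act_continuous_in l V h x HV Vx) as [A [B [HA [Ah [HB [Bx HAB]]]]]].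
  exists A, (fun y : L => forall j, In j l -> B j (lim_proj y j)).
  split; [|split; [|split; [|split]]]; auto.
  - intros y Hy. exists l, B. auto.
  - intros [h' y] Ah' By. apply C. intros i Hi. apply HAB; auto.
Qed.

Section Compactness.
Variable F : (L -> Prop) -> Prop.
Hypothesis F_open : forall U, F U -> lim_open U.
Hypothesis F_cover : forall x, exists U, F U /\ U x.

Definition finitely_covered (A : L -> Prop) : Prop :=
  exists l : list (L -> Prop), (forall U, In U l -> F U) /\
    forall y, A y -> exists U, In U l /\ U y.

Lemma finitely_covered_mono (A B : L -> Prop) :
  (forall y, A y -> B y) -> finitely_covered B -> finitely_covered A.
Proof. intros AB [l [Hl Hcov]]. exists l. auto. Qed.

Lemma finitely_covered_union A B :
  finitely_covered A -> finitely_covered B -> finitely_covered (fun y => A y \/ B y).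
Proof.
  intros [l1 [H1 C1]] [l2 [H2 C2]]. exists (l1 ++ l2). split.
  - intros U HU. apply in_app_or in HU. destruct HU; auto.
  - intros y [Ay|By]; [destruct (C1 y Ay) as [U [HU Uy]]|destruct (C2 y By) as [U [HU Uy]]];
      exists U; auto using in_or_app.
Qed.

Lemma finitely_covered_single U : F U -> finitely_covered U.
Proof.
  intro FU. exists [U]. split; [intros V [<-|[]]; exact FU|].
  intros y Uy. exists U. simpl; auto.
Qed.

Hypothesis no_finite_subcover : ~ finitely_covered (fun _ => True).

Definition coverable e (z : X e) : Prop :=
  exists W, gs_open (X e) W /\ W z /\ finitely_covered (fun y => W (lim_proj y e)).

Section Extension.
Variables (e : J) (x : forall i, X i).
Hypothesis x_coherent : forall d d', lt d d' -> lt d' e -> pmap d d' (x d') = x d.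
Hypothesis x_uncoverable : forall d, lt d e -> ~ coverable d (x d).

Definition nbhd_below (N : L -> Prop) : Prop :=
  (forall y, N y) \/
  exists d, lt d e /\ exists V, gs_open (X d) V /\ V (x d) /\ forall y, V (lim_proj y d) -> N y.

Lemma nbhd_below_mono (N N' : L -> Prop) :
  (forall y, N y -> N' y) -> nbhd_below N -> nbhd_below N'.
Proof.
  intros NN' [HN|[d [Hd [V [HV [Vx HN]]]]]]; [left; auto|].
  right. exists d. split; [exact Hd|]. exists V. auto.
Qed.

Lemma nbhd_below_not_covered N : nbhd_below N -> ~ finitely_covered N.
Proof.
  intros [HN|[d [Hd [V [HV [Vx HN]]]]]] Hcov.
  - exact (no_finite_subcover (finitely_covered_mono _ (fun y _ => HN y) Hcov)).
  - apply (x_uncoverable Hd). exists V. split; [exact HV|]. split; [exact Vx|].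
    exact (finitely_covered_mono _ HN Hcov).
Qed.

Lemma nbhd_below_pair d1 d2 V1 V2 : lt d1 d2 \/ d1 = d2 -> lt d2 e ->
  gs_open (X d1) V1 -> V1 (x d1) -> gs_open (X d2) V2 -> V2 (x d2) ->
  nbhd_below (fun y => V1 (lim_proj y d1) /\ V2 (lim_proj y d2)).
Proof.
  intros Hle Hd2 HV1 V1x HV2 V2x. right. exists d2. split; [exact Hd2|].
  exists (fun z => V1 (pmap d1 d2 z) /\ V2 z). split; [|split].
  - apply open_and; [apply gs_topology|apply (sys_map_continuous Hle), HV1|exact HV2].
  - split; [|exact V2x]. destruct Hle as [Hlt| ->]; [rewrite x_coherent|rewrite sys_map_id]; auto.
  - intros y [V1y V2y]. rewrite lim_proj_map in V1y; auto.
Qed.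

Lemma nbhd_below_and N1 N2 :
  nbhd_below N1 -> nbhd_below N2 -> nbhd_below (fun y => N1 y /\ N2 y).
Proof.
  intros [H1|[d1 [Hd1 [V1 [HV1 [V1x H1]]]]]] H2.
  - apply nbhd_below_mono with (2 := H2). auto.
  - destruct H2 as [H2|[d2 [Hd2 [V2 [HV2 [V2x H2]]]]]].
    + right. exists d1. split; [exact Hd1|]. exists V1. auto.
    + destruct (sys_lt_total S d1 d2) as [Hlt|[<-|Hlt]].
      * apply nbhd_below_mono with (2 := nbhd_below_pair V1 V2 (or_introl Hlt) Hd2 HV1 V1x HV2 V2x).
        intros y []; auto.
      * apply nbhd_below_mono
          with (2 := nbhd_below_pair V1 V2 (or_intror eq_refl) Hd2 HV1 V1x HV2 V2x).
        intros y []; auto.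
      * apply nbhd_below_mono with (2 := nbhd_below_pair V2 V1 (or_introl Hlt) Hd1 HV2 V2x HV1 V1x).
        intros y []; auto.
Qed.

Definition small (A : X e -> Prop) : Prop :=
  exists N, nbhd_below N /\ finitely_covered (fun y => N y /\ A (lim_proj y e)).

Lemma small_union A B : small A -> small B -> small (fun z => A z \/ B z).
Proof.
  intros [N1 [HN1 C1]] [N2 [HN2 C2]]. exists (fun y => N1 y /\ N2 y).
  split; [apply nbhd_below_and; auto|].
  apply finitely_covered_mono
    with (fun y => (N1 y /\ A (lim_proj y e)) \/ (N2 y /\ B (lim_proj y e))).
  - intros y [[N1y N2y] [Ay|By]]; auto.
  - apply finitely_covered_union; auto.
Qed.

Lemma small_union_in (l : list (X e -> Prop)) :
  (forall O, In O l -> small O) -> small (fun z => exists O, In O l /\ O z).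
Proof.
  induction l as [|O l IH]; intro Hl.
  - exists (fun _ => True). split; [left; auto|].
    exists []. split; [intros U []|]. intros y [_ [O [[] _]]].
  - destruct (small_union (Hl O (or_introl eq_refl)) (IH (fun O' H => Hl O' (or_intror H))))
      as [N [HN C]].
    exists N. split; [exact HN|]. apply finitely_covered_mono with (2 := C).
    intros y [Ny [O' [[<-|HO'] O'y]]]; eauto.
Qed.

Lemma small_of_coverable W : finitely_covered (fun y => W (lim_proj y e)) -> small W.
Proof.
  intro HW. exists (fun _ => True). split; [left; auto|].
  apply finitely_covered_mono with (2 := HW). tauto.
Qed.

(* Hausdorff separation at level [d] gives a neighbourhood of [z] over which no thread passes
   near [x d]. *)
Lemma small_of_incoherent (z : X e) d : lt d e -> pmap d e z <> x d ->
  exists O, (gs_open (X e) O /\ small O) /\ O z.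
Proof.
  intros Hde Hne.
  destruct (gs_hausdorff (X d) Hne) as [U [V [HU [HV [Uz [Vx D]]]]]].
  exists (fun w => U (pmap d e w)). split; [split|exact Uz].
  - apply (sys_map_continuous (or_introl Hde)), HU.
  - exists (fun y => V (lim_proj y d)). split; [right; exists d; split; [exact Hde|]; eauto|].
    exists []. split; [intros U' []|]. intros y [Vy Uy].
    rewrite lim_proj_map in Uy by (left; exact Hde). destruct (D _ (conj Uy Vy)).
Qed.

Lemma noncoverable_extension :
  exists z, (forall d, lt d e -> pmap d e z = x d) /\ ~ coverable e z.
Proof.
  apply NNPP. intro Hno.
  assert (Hsmall : forall z, exists O, (gs_open (X e) O /\ small O) /\ O z).
  { intro z. destruct (classic (forall d, lt d e -> pmap d e z = x d)) as [Hc|Hc].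
    - destruct (NNPP (coverable e z) (fun Hz => Hno (ex_intro _ z (conj Hc Hz))))
        as [W [HW [Wz C]]].
      exists W. split; [split; [exact HW|apply small_of_coverable, C]|exact Wz].
    - apply not_all_ex_not in Hc as [d Hd]. apply imply_to_and in Hd as [Hde Hne].
      exact (small_of_incoherent z Hde Hne). }
  destruct (gs_compact (X e) _ (fun O HO => proj1 HO) Hsmall) as [l [Hl Hcov]].
  destruct (small_union_in l (fun O HO => proj2 (Hl O HO))) as [N [HN C]].
  apply (nbhd_below_not_covered HN). apply finitely_covered_mono with (2 := C).
  intros y Ny. split; [exact Ny|apply Hcov].
Qed.
End Extension.

Lemma noncoverable_thread : exists x : L, forall e, ~ coverable e (lim_proj x e).
Proof.
  destruct (transfinite_choice (sys_lt_wf S) (sys_lt_trans S) X (fun i => gs_inhabited (X i))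
     (fun e x z => (forall d, lt d e -> pmap d e z = x d) /\ ~ coverable e z)) as [x Hx].
  - intros e x x' z E [Hc Hu]. split; [|exact Hu]. intros d Hd. rewrite <- E; auto.
  - intros e x IH. apply noncoverable_extension.
    + intros d d' Hdd' Hd'e. apply (IH d' Hd'e), Hdd'.
    + intros d Hd. apply (IH d Hd).
  - assert (Hc : forall d e, lt d e \/ d = e -> pmap d e (x e) = x d).
    { intros d e [Hde| ->]; [apply (Hx e), Hde|apply sys_map_id]. }
    exists (exist _ x Hc). intro e. apply (Hx e).
Qed.

(* A member of the cover around the thread contains a basic neighbourhood, which constrains
   finitely many coordinates, hence (through the largest of them) a single one. *)
Lemma no_finite_subcover_absurd : False.
Proof.
  destruct noncoverable_thread as [x Hx].
  destruct (F_cover x) as [U [FU Ux]].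
  destruct (F_open FU x Ux) as [l [V [HV [Vx HU]]]].
  destruct (classic (l = [])) as [->|Hl].
  - apply no_finite_subcover, finitely_covered_mono with (2 := finitely_covered_single FU).
    intros y _. apply HU. intros i [].
  - destruct (sys_list_max Hl) as [m [Hm Hmax]].
    apply (Hx m). exists (fun z => forall i, In i l -> V i (pmap i m z)). split; [|split].
    + apply open_forall_in; [apply gs_topology|]. intros i Hi.
      apply (sys_map_continuous (Hmax i Hi)), HV, Hi.
    + intros i Hi. rewrite lim_proj_map by auto. apply Vx, Hi.
    + apply finitely_covered_mono with (2 := finitely_covered_single FU).
      intros y Hy. apply HU. intros i Hi. specialize (Hy i Hi). rewrite lim_proj_map in Hy; auto.
Qed.
End Compactness.

Lemma lim_compact : compact (lim_open (S:=S)).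
Proof.
  intros F HF Hcov. apply NNPP. intro H. apply (no_finite_subcover_absurd HF Hcov).
  intros [l [H1 H2]]. apply H. exists l. split; auto.
Qed.

Definition extension_property : Prop :=
  forall e (t : forall i, X i), (forall d d', lt d d' -> lt d' e -> pmap d d' (t d') = t d) ->
  exists y, forall d, lt d e -> pmap d e y = t d.

Section WithExtension.
Hypothesis EP : extension_property.

Lemma thread_through d (a : X d) : exists x : L, lim_proj x d = a.
Proof.
  destruct (transfinite_choice (sys_lt_wf S) (sys_lt_trans S) X (fun i => gs_inhabited (X i))
     (fun e x z => (forall d', lt d' e -> pmap d' e z = x d') /\
                   (lt e d \/ e = d -> z = pmap e d a))) as [x Hx].
  - intros e x x' z E [Hc Ha]. split; [|exact Ha]. intros d' Hd'. rewrite <- E; auto.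
  - intros e x IH. destruct (classic (lt e d \/ e = d)) as [Hed|Hed].
    + exists (pmap e d a). split; [|auto]. intros d' Hd'.
      rewrite <- (sys_map_comp S (or_introl Hd') Hed). symmetry. apply (IH d' Hd').
      destruct Hed as [Hed| ->]; [left; exact (sys_lt_trans S _ _ _ Hd' Hed)|left; exact Hd'].
    + destruct (EP e x) as [y Hy]; [intros d1 d2 H12 H2e; apply (IH d2 H2e), H12|].
      exists y. split; [exact Hy|tauto].
  - assert (Hc : forall d' e, lt d' e \/ d' = e -> pmap d' e (x e) = x d').
    { intros d' e [Hde| ->]; [apply (Hx e), Hde|apply sys_map_id]. }
    exists (exist _ x Hc). unfold lim_proj; simpl.
    rewrite (proj2 (Hx d)) by auto. apply sys_map_id.
Qed.

Lemma lim_inhabited : inhabited L.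
Proof.
  destruct (classic (inhabited J)) as [[d]|HJ].
  - destruct (gs_inhabited (X d)) as [a]. destruct (thread_through d a) as [x _].
    exact (inhabits x).
  - assert (x : forall i, X i) by (intro i; exfalso; exact (HJ (inhabits i))).
    assert (Hc : forall d e, lt d e \/ d = e -> pmap d e (x e) = x d)
      by (intro d; exfalso; exact (HJ (inhabits d))).
    exact (inhabits (exist _ x Hc)).
Qed.

Lemma lim_is_gspace : is_gspace G (lim_open (S:=S)) (lim_act (S:=S)).
Proof.
  split; [exact lim_topology|]. split; [exact lim_inhabited|].
  split; [exact lim_compact|]. split; [exact lim_hausdorff|].
  split; [exact lim_act_continuous|]. split.
  - intro x. apply lim_ext. intro i. apply gs_act_one.
  - intros g h x. apply lim_ext. intro i. apply gs_act_mul.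
Qed.

Lemma lim_proj_epimorphism (H : is_gspace G (lim_open (S:=S)) (lim_act (S:=S))) i :
  epimorphism (mkGSpace H) (X i) (fun x => lim_proj x i).
Proof.
  split; [|split].
  - intro a. apply thread_through.
  - apply lim_proj_continuous.
  - intros g x. reflexivity.
Qed.
End WithExtension.
End ProjectiveLimit.

Section Coalescence.
Variables (G : TopGroup) (K : GSpace G -> Prop).
Hypothesis K_closed : closed_under_proj_limits K.
Variable M : GSpace G.
Hypothesis K_M : K M.
Hypothesis M_universal : forall N, K N -> factor_of N M.
Variable phi : M -> M.
Hypothesis phi_epi : epimorphism M M phi.
Variables x1 x2 : M.
Hypothesis phi_glue : phi x1 = phi x2.

(* Ordinals of cardinality beyond that of [M * M]. *)
Local Notation Ω := (ord (M * M)).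
Local Notation lt := (@ord_lt (M * M)).

(* [z δ] is the bonding map from level [γ] to level [δ < γ] (the identity for other [δ]),
   given those ([col η δ]) out of the lower levels [η]; every bonding map identifies [x1]
   with [x2]. *)
Record stage (γ : Ω) (col : Ω -> Ω -> M -> M) (z : Ω -> M -> M) : Prop := {
  stage_id : forall δ y, ~ lt δ γ -> z δ y = y;
  stage_epi : forall δ, lt δ γ -> epimorphism M M (z δ);
  stage_comp : forall δ η, lt δ η -> lt η γ -> forall y, z δ y = col η δ (z η y);
  stage_lift : forall t : Ω -> M,
    (forall δ η, lt δ η -> lt η γ -> col η δ (t η) = t δ) ->
    exists y, forall δ, lt δ γ -> z δ y = t δ;
  stage_glue : forall δ, lt δ γ -> z δ x1 = z δ x2 }.

Lemma stage_local γ col col' z :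
  (forall η, lt η γ -> col η = col' η) -> stage γ col z -> stage γ col' z.
Proof.
  intros E [Hid Hepi Hcomp Hlift Hglue]. split; auto.
  - intros δ η Hδη Hηγ y. rewrite <- E; auto.
  - intros t Ht. apply Hlift. intros δ η Hδη Hηγ. rewrite E; auto.
Qed.

Section Tower.
Variables (P : Ω -> Prop) (col : Ω -> Ω -> M -> M).
Hypothesis P_down : forall δ η, lt δ η -> P η -> P δ.
Hypothesis col_stage : forall η, P η -> stage η col (col η).

Definition tower_idx := { δ : Ω | P δ }.
Definition tower_lt (a b : tower_idx) : Prop := lt (proj1_sig a) (proj1_sig b).
Definition tower_map (a b : tower_idx) : M -> M := col (proj1_sig b) (proj1_sig a).

Lemma tower_idx_eq (a b : tower_idx) : proj1_sig a = proj1_sig b -> a = b.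
Proof. destruct a, b; simpl. intros ->. f_equal. apply proof_irrelevance. Qed.

Lemma tower_lt_wf : well_founded tower_lt.
Proof. exact (wf_inverse_image _ _ _ _ (@ord_lt_wf _)). Qed.

Lemma tower_lt_trans a b c : tower_lt a b -> tower_lt b c -> tower_lt a c.
Proof. apply ord_lt_trans. Qed.

Lemma tower_lt_total a b : tower_lt a b \/ a = b \/ tower_lt b a.
Proof.
  destruct (ord_lt_total (proj1_sig a) (proj1_sig b)) as [H|[H|H]]; auto.
  right; left. apply tower_idx_eq, H.
Qed.

Lemma tower_map_id a y : tower_map a a y = y.
Proof. apply (col_stage (proj2_sig a)), ord_lt_irrefl. Qed.

Lemma tower_map_epi a b : tower_lt a b \/ a = b -> epimorphism M M (tower_map a b).
Proof.
  intros [Hab| <-].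
  - apply (col_stage (proj2_sig b)), Hab.
  - apply epimorphism_ext with (fun y => y); [intro y; symmetry; apply tower_map_id|].
    apply epimorphism_id.
Qed.

Lemma tower_map_comp a b c : tower_lt a b \/ a = b -> tower_lt b c \/ b = c ->
  forall y, tower_map a c y = tower_map a b (tower_map b c y).
Proof.
  intros [Hab| <-] [Hbc| <-] y; rewrite ?tower_map_id; auto.
  apply (col_stage (proj2_sig c)); assumption.
Qed.

Definition tower_sys : InvSys G :=
  mkInvSys tower_lt_wf tower_lt_trans tower_lt_total (fun _ => M) tower_map
    tower_map_epi tower_map_id tower_map_comp.

Lemma tower_extension : extension_property tower_sys.
Proof.
  intros [e He] t Ht. destruct (gs_inhabited M) as [m].
  set (t' := fun δ : Ω => match excluded_middle_informative (P δ) with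
             | left p => t (exist _ δ p) | right _ => m end).
  assert (Ht' : forall δ (p : P δ), t' δ = t (exist _ δ p)).
  { intros δ p. unfold t'. destruct (excluded_middle_informative _); [|contradiction].
    f_equal. apply tower_idx_eq. reflexivity. }
  destruct (stage_lift (col_stage He) t') as [y Hy].
  - intros δ η Hδη Hηe.
    pose proof (P_down η Hηe He) as Pη. pose proof (P_down δ Hδη Pη) as Pδ.
    rewrite (Ht' η Pη), (Ht' δ Pδ). apply (Ht (exist _ δ Pδ) (exist _ η Pη)); assumption.
  - exists y. intros [d Pd] Hde. simpl. unfold tower_map; simpl. rewrite Hy by exact Hde. apply Ht'.
Qed.

Definition tower_space : GSpace G := mkGSpace (lim_is_gspace tower_extension).

Lemma tower_space_in_K : K tower_space.
Proof. apply K_closed. intro i. exact K_M. Qed.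
End Tower.

Section NextStage.
Variables (γ : Ω) (col : Ω -> Ω -> M -> M).
Hypothesis col_below : forall η, lt η γ -> stage η col (col η).

Definition below_tower : GSpace G :=
  tower_space (fun δ => lt δ γ) (fun δ η => ord_lt_trans δ η γ) col_below.

Lemma below_tower_extension : extension_property (tower_sys (fun δ => lt δ γ) col_below).
Proof. exact (tower_extension (fun δ η => ord_lt_trans δ η γ) (col_stage := col_below)). Qed.

Section Lift.
Variable psi : M -> below_tower.
Hypothesis psi_epi : epimorphism M below_tower psi.

Definition lift_map (δ : Ω) (y : M) : M :=
  match excluded_middle_informative (lt δ γ) with
  | left p => lim_proj (psi (phi y)) (exist _ δ p)
  | right _ => y
  end.

Lemma lift_map_below δ (p : lt δ γ) y : lift_map δ y = lim_proj (psi (phi y)) (exist _ δ p).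
Proof.
  unfold lift_map. destruct (excluded_middle_informative _) as [p'|]; [|contradiction].
  rewrite (proof_irrelevance _ p' p). reflexivity.
Qed.

Lemma lift_map_stage : stage γ col lift_map.
Proof.
  split.
  - intros δ y Hδ. unfold lift_map. destruct (excluded_middle_informative _); tauto.
  - intros δ Hδ.
    assert (E : epimorphism M M (fun y => lim_proj (psi (phi y)) (exist _ δ Hδ))).
    { exact (epimorphism_comp phi_epi (epimorphism_comp psi_epi
        (lim_proj_epimorphism below_tower_extension _ (exist _ δ Hδ)))). }
    exact (epimorphism_ext _ (fun y => eq_sym (lift_map_below _ Hδ y)) E).
  - intros δ η Hδη Hηγ y.
    rewrite (lift_map_below _ Hηγ), (lift_map_below _ (ord_lt_trans _ _ _ Hδη Hηγ)).
    symmetry. apply (lim_proj_map (psi (phi y)) (d := exist _ δ _) (e := exist _ η Hηγ)).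
    left. exact Hδη.
  - intros t Ht.
    assert (Hc : forall a b : tower_idx (fun δ => lt δ γ), tower_lt a b \/ a = b ->
                 tower_map col a b (t (proj1_sig b)) = t (proj1_sig a)).
    { intros a b [Hab| <-]; [apply Ht; [exact Hab|exact (proj2_sig b)]|].
      apply (tower_map_id col_below). }
    destruct (proj1 psi_epi (exist _ (fun a => t (proj1_sig a)) Hc)) as [w Hw].
    destruct (proj1 phi_epi w) as [y <-].
    exists y. intros δ Hδ. rewrite (lift_map_below _ Hδ), Hw. reflexivity.
  - intros δ Hδ. rewrite !(lift_map_below _ Hδ), phi_glue. reflexivity.
Qed.
End Lift.

Lemma next_stage : exists z, stage γ col z.
Proof.
  destruct (M_universal (tower_space_in_K (fun δ => lt δ γ) (fun δ η => ord_lt_trans δ η γ)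
                                          col_below)) as [psi psi_epi].
  exists (lift_map psi). exact (lift_map_stage psi_epi).
Qed.
End NextStage.

Lemma tower_exists : exists col : Ω -> Ω -> M -> M, forall γ, stage γ col (col γ).
Proof.
  destruct (transfinite_choice (@ord_lt_wf _) (@ord_lt_trans _) (fun _ => Ω -> M -> M)
     (fun _ => inhabits (fun _ y => y))
     (fun γ col z => (forall η, lt η γ -> stage η col (col η)) -> stage γ col z))
    as [col Hcol].
  - intros γ col col' z E Hz Hbelow. apply (stage_local col' E), Hz.
    intros η Hη. rewrite (E η Hη).
    apply (stage_local (col := col') col); [|exact (Hbelow η Hη)].
    intros η' Hη'. symmetry. apply E, (ord_lt_trans _ _ _ Hη' Hη).
  - intros γ col _. destruct (classic (forall η, lt η γ -> stage η col (col η))) as [H|H].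
    + destruct (next_stage γ H) as [z Hz]. eauto.
    + exists (fun _ y => y). tauto.
  - exists col. intro γ. induction (ord_lt_wf γ) as [γ _ IH]. apply Hcol, IH.
Qed.

Section FullTower.
Variable col : Ω -> Ω -> M -> M.
Hypothesis col_stage : forall γ, stage γ col (col γ).
Hypothesis x1_neq_x2 : x1 <> x2.

Definition full_tower : GSpace G :=
  tower_space (fun _ => True) (fun _ _ _ _ => I) (fun γ _ => col_stage γ).

Lemma full_tower_extension :
  extension_property (tower_sys (fun _ => True) (fun γ _ => col_stage γ)).
Proof. exact (tower_extension (fun _ _ _ _ => I) (col_stage := fun γ _ => col_stage γ)). Qed.

Definition level (γ : Ω) : tower_idx (fun _ => True) := exist _ γ I.

Variable psi : M -> full_tower.
Hypothesis psi_epi : epimorphism M full_tower psi.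

(* Lifts of the threads through [x1] and [x2] at level [γ]; all bonding maps into lower
   levels identify [x1] and [x2]. *)
Lemma first_difference γ : exists p : M * M,
  (forall δ, lt δ γ -> lim_proj (psi (fst p)) (level δ) = lim_proj (psi (snd p)) (level δ)) /\
  lim_proj (psi (fst p)) (level γ) <> lim_proj (psi (snd p)) (level γ).
Proof.
  destruct (thread_through full_tower_extension (level γ) x1) as [s Hs].
  destruct (thread_through full_tower_extension (level γ) x2) as [t Ht].
  destruct (proj1 psi_epi s) as [u <-], (proj1 psi_epi t) as [v <-].
  exists (u, v). split; simpl.
  - intros δ Hδ.
    rewrite <- (lim_proj_map (psi u) (d := level δ) (e := level γ) (or_introl Hδ)),
            <- (lim_proj_map (psi v) (d := level δ) (e := level γ) (or_introl Hδ)).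
    rewrite Hs, Ht. apply (stage_glue (col_stage γ)), Hδ.
  - rewrite Hs, Ht. exact x1_neq_x2.
Qed.

Lemma full_tower_absurd : False.
Proof.
  destruct (choice _ first_difference) as [e He].
  apply (no_injection_ord e). intros γ γ' E.
  destruct (ord_lt_total γ γ') as [H|[H|H]]; [exfalso|exact H|exfalso].
  - apply (proj2 (He γ)). rewrite E. apply (proj1 (He γ')), H.
  - apply (proj2 (He γ')). rewrite <- E. apply (proj1 (He γ)), H.
Qed.
End FullTower.

Lemma glued_points_eq : x1 = x2.
Proof.
  apply NNPP. intro Hne.
  destruct tower_exists as [col Hcol].
  destruct (M_universal (tower_space_in_K (fun _ => True) (fun _ _ _ _ => I) (fun γ _ => Hcol γ)))
    as [psi psi_epi].
  exact (full_tower_absurd Hne psi_epi).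
Qed.
End Coalescence.

Theorem mainTheorem2 (G : TopGroup) (K : GSpace G -> Prop)
  (HK : closed_under_proj_limits K) (M : GSpace G) (HM : universal K M) :
  coalescent M.
Proof.
  intros phi phi_epi. split; [exact phi_epi|].
  intros x1 x2 E. destruct HM as [K_M M_universal].
  exact (glued_points_eq HK K_M M_universal phi_epi _ _ E).
Qed.
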